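(* Assume $\mu_*<1$. Then the probability measure $\wp$ on $\Omega_+$ is continuous, i.e. $\wp(\{\widehat\zeta^{(0)}\})=0$ for every point $\widehat\zeta^{(0)}\in\Omega_+$.
   Context: Model. Fix $d\ge1$. $(X_t,\xi_t)_{t\in\mathbb{Z}_+}$ is a Markov chain with $X_t\in\mathbb{Z}^d$, $X_0=0$, $\xi_t\in\Omega:=\{-1,+1\}^{\mathbb{Z}^d}$. Given $X_t=x,\xi_t=\bar\xi$, the next position and the next environment are conditionally independent; $P(X_{t+1}=x+u\mid X_t=x,\xi_t=\bar\xi)=P_0(u)+\epsilon c(u)\bar\xi(x)$, where $\epsilon>0$, $P_0$ is an even, finite-range probability distribution on $\mathbb{Z}^d$ with $|\sum_u P_0(u)e^{i(\lambda,u)}|=1$ iff $\lambda=0$ and such that $1/\tilde p_0(\lambda)$ (with $\tilde p_0(\lambda)=\sum_u P_0(u)e^{i(\lambda,u)}$) has absolutely summable Fourier coefficients, and $c$ is an odd finite-range real function with $P_0(u)\pm\epsilon c(u)\in[0,1)$. Given $X_t=x,\xi_t=\bar\xi$, the values $\xi_{t+1}(y)$, $y\in\mathbb{Z}^d$, are independent with $P(\xi_{t+1}(y)=s)=Q_0(\bar\xi(y),s)$ if $y\ne x$ and $Q_1(\bar\xi(y),s)$ if $y=x$, where $Q_0,Q_1$ are symmetric $2\times2$ stochastic matrices, $Q_0$ has eigenvalues $1,\mu$ with $0<|\mu|<1$, and $Q_1-Q_0=O(\epsilon)$. The environment seen from the walk, $\eta_t(x)=\xi_t(X_t+x)$, is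 a Markov chain on $\Omega$ with stochastic operator $(\mathcal T f)(\bar\eta)=\mathcal E[f(\eta_{t+1})\mid\eta_t=\bar\eta]$. $\Pi_0$ is the product of uniform measures on $\{\pm1\}$. For finite $\Gamma\subset\mathbb{Z}^d$ let $\Phi_\Gamma(\eta)=\prod_{x\in\Gamma}\eta(x)$, $\Phi_\emptyset=1$; each $f\in L^2(\Omega,\Pi_0)$ is written $f=\sum_\Gamma f_\Gamma\Phi_\Gamma$. For a fixed $M>1$, $\mathcal H_M=\{f:\|f\|_M:=\sum_\Gamma|f_\Gamma|M^{|\Gamma|}<\infty\}$. Standing assumptions (valid for $\epsilon,|\mu|$ small): $\mathcal T$ maps $\mathcal H_M$ into itself; the chain $(\eta_t)$ has an invariant probability measure $\Pi$, absolutely continuous w.r.t. $\Pi_0$ with bounded density; there is $\bar\mu\in(0,1)$ with $\|\mathcal T f\|_M\le\bar\mu\|f\|_M$ for all $f\in\widehat{\mathcal H}_M:=\{f\in\mathcal H_M:\int f\,d\Pi=0\}$. The dynamics and $\Pi$ are invariant under the global spin flip $\eta\mapsto-\eta$. Path space notation: $\mathcal P_\Pi$ is the law of $(\eta_t)_{t\ge0}$ with $\eta_0\sim\Pi$. $\zeta_t:=\eta_t(0)$, $\widehat\zeta=(\zeta_t)_{t\ge0}\in\Omega_+:=\{\pm1\}^{\mathbb{Z}_+}$, and $\wp$ is the law of $\widehat\zeta$ under $\mathcal P_\Pi$ (a probability on $\Omega_+$ with its cylinder $\sigma$-algebra). $\mu_*:=M\sqrt{\bar\mu(1+2\bar\mu)}$.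 *)

From HB Require Import structures.
From mathcomp Require Import all_boot all_order all_algebra.
From mathcomp Require Import finmap.
From mathcomp Require Import all_classical all_reals all_analysis.
Set Implicit Arguments. Unset Strict Implicit. Unset Printing Implicit Defensive.
Import Order.TTheory GRing.Theory Num.Theory.
Local Open Scope classical_set_scope.
Local Open Scope ring_scope.

Definition Site (d : nat) := 'rV[int]_d.

Definition spin {R : pzRingType} (b : bool) : R := if b then 1 else -1.

Definition sidx (b : bool) : 'I_2 := if b then ord_max else ord0.

Definition coord_sets (d : nat) : set (set (Site d -> bool)) :=
  [set A | exists x b, A = [set e | e x = b]].
Definition Omega (d : nat) := @g_sigma_algebraType _ (@coord_sets d).

Definition path_sets : set (set (nat -> bool)) :=
  [set A | exists k b, A = [set z | z k = b]].
Definition OmegaP := @g_sigma_algebraType _ path_sets.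

Definition cylinder (d : nat) (L : {fset Site d}) (s : Site d -> bool)
  : set (Omega d) := [set e | forall x, x \in L -> e x = s x].

Definition Phi {R : realType} (d : nat) (G : {fset Site d}) (e : Omega d) : R :=
  \prod_(x <- G) spin (e x).

Section ModelDefs.
Variable R : realType.
Variable d : nat.

Definition dotR (l : 'rV[R]_d) (u : Site d) : R :=
  \sum_(i < d) l ord0 i * (u ord0 i)%:~R.

(* \tilde p_0(lambda) = sum_u P0(u) e^{i(lambda,u)}; P0 is even with support
   in the finite set U, so this is the real number sum_u P0(u) cos (lambda,u) *)
Definition ptilde0 (U : {fset Site d}) (P0 : Site d -> R) (l : 'rV[R]_d) : R :=
  \sum_(u <- U) P0 u * cos (dotR l u).

Definition ssum (T : choiceType) (f : T -> R) : R :=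
  fine (\esum_(x in [set: T]) (fun y => (f y)%:E)^\+ x
        - \esum_(x in [set: T]) (fun y => (f y)%:E)^\- x)%E.

(* Q_1 at the site of the walker (relative position 0), Q_0 elsewhere *)
Definition Qat (Q0 Q1 : 'M[R]_2) (y : Site d) : 'M[R]_2 :=
  if y == 0 then Q1 else Q0.

(* P(eta_{t+1}(x) = s(x) for all x in L | eta_t = e):
   the walker jumps by u with prob. P0(u) + eps c(u) e(0), and independently
   each xi_{t+1}(y) is drawn from Q_{1 or 0}(xi_t(y), .); eta_{t+1}(x) = xi_{t+1}(u+x) *)
Definition step_cyl (eps : R) (P0 c : Site d -> R) (U : {fset Site d})
  (Q0 Q1 : 'M[R]_2) (e : Omega d) (L : {fset Site d}) (s : Site d -> bool) : R :=
  \sum_(u <- U) ((P0 u + eps * c u * spin (e 0)) *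
     \prod_(x <- L) Qat Q0 Q1 (u + x) (sidx (e (u + x))) (sidx (s x))).

Definition fcoef (Pi0 : probability (Omega d) R) (f : Omega d -> R)
  (G : {fset Site d}) : R :=
  Rintegral Pi0 setT (fun e => f e * Phi G e).

Definition normM (Pi0 : probability (Omega d) R) (M : R) (f : Omega d -> R)
  : \bar R :=
  \esum_(G in [set: {fset Site d}]) (`|fcoef Pi0 f G| * M ^+ #|` G|)%:E.

Definition inHM (Pi0 : probability (Omega d) R) (M : R) (f : Omega d -> R) : Prop :=
  [/\ measurable_fun setT f,
      Pi0.-integrable setT (fun e => (f e ^+ 2)%:E) &
      (normM Pi0 M f < +oo)%E].

Definition Top (K : R.-pker (Omega d) ~> (Omega d)) (f : Omega d -> R)
  (e : Omega d) : R :=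
  Rintegral (K e) setT f.

(* finite-dimensional distributions of (zeta_t) under P_Pi:
   fdd_fun K s m k e = P(zeta_k = s k, ..., zeta_{k+m} = s (k+m) | eta_k = e) *)
Fixpoint fdd_fun (K : R.-pker (Omega d) ~> (Omega d)) (s : nat -> bool)
  (m k : nat) (e : Omega d) {struct m} : \bar R :=
  match m with
  | 0 => ((e 0 == s k)%:R)%:E
  | m'.+1 => (((e 0 == s k)%:R)%:E * \int[K e]_e' fdd_fun K s m' k.+1 e')%E
  end.

End ModelDefs.

Definition flip (d : nat) (e : Omega d) : Omega d := fun x => ~~ e x.

From HB Require Import structures.
From mathcomp Require Import all_boot all_order all_algebra.
From mathcomp Require Import finmap.
From mathcomp Require Import all_classical all_reals all_analysis.
From mathcomp Require Import measurable_realfun.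
From mathcomp Require Import ring lra.
Set Implicit Arguments. Unset Strict Implicit. Unset Printing Implicit Defensive.
Import Order.TTheory GRing.Theory Num.Theory numFieldNormedType.Exports.
Local Open Scope classical_set_scope.
Local Open Scope ring_scope.

(* At each step the spin under the walker hits a prescribed value with
   probability at most delta = q + (1 - q) P0(0) < 1: the walker moves to
   u <> 0 with probability 1 - P0(0) (c(0) = 0 by oddness), and the new spin
   there is drawn from Q0, whose entries are all at most some q < 1 because
   |mu| < 1. By the Markov property a prefix of length n + 1 of zeta then has
   probability at most delta^n, so every point of Omega_+ is null. *)

Lemma sum_ord2 (R : nmodType) (F : 'I_2 -> R) : \sum_i F i = F ord0 + F ord_max.
Proof. by rewrite big_ord_recr big_ord1; congr (F _ + F _); exact: val_inj. Qed.

Lemma ord2P (i : 'I_2) : i = ord0 \/ i = ord_max.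
Proof. by case: i => [[|[|i]] Hi]; [left|right|by []]; exact: val_inj. Qed.

Section SymmetricStochastic2.
Variables (R : realFieldType) (Q : 'M[R]_2).
Hypotheses (Q_row1 : forall i, \sum_j Q i j = 1)
  (Q_sym : Q^T = Q).

Let b := Q ord0 ord_max.

Lemma sym_stochastic2E i j : Q i j = if i == j then 1 - b else b.
Proof.
have Q10 : Q ord_max ord0 = b by rewrite -[in LHS]Q_sym mxE.
have := Q_row1 i; rewrite sum_ord2.
by case: (ord2P i) => ->; case: (ord2P j) => -> /=; rewrite ?Q10 -/b; lra.
Qed.

Lemma sym_stochastic2_eigenvalue mu : mu != 1 -> eigenvalue Q mu -> mu = 1 - 2 * b.
Proof.
move=> mu_neq1 /eigenvalueP[v vQ v_neq0].
set x := v ord0 ord0; set y := v ord0 ord_max.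
have E0 : x * (1 - b) + y * b = mu * x.
  by have /matrixP/(_ ord0 ord0) := vQ; rewrite !mxE sum_ord2 !sym_stochastic2E.
have E1 : x * b + y * (1 - b) = mu * y.
  by have /matrixP/(_ ord0 ord_max) := vQ; rewrite !mxE sum_ord2 !sym_stochastic2E.
have yE : y = - x.
  have : (1 - mu) * (x + y) =
      (x * (1 - b) + y * b - mu * x) + (x * b + y * (1 - b) - mu * y) by ring.
  rewrite E0 E1 !subrr addr0 => /eqP.
  rewrite mulf_eq0 subr_eq0 eq_sym (negPf mu_neq1) addr_eq0 => /eqP ->.
  by rewrite opprK.
have x_neq0 : x != 0.
  apply: contraNneq v_neq0 => x0; apply/eqP/matrixP => i j.
  rewrite (ord1 i) mxE; case: (ord2P j) => ->; first exact: x0.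
  by rewrite -/y yE x0 oppr0.
have : x * (1 - 2 * b - mu) = x * (1 - b) + y * b - mu * x by rewrite yE; ring.
rewrite E0 subrr => /eqP; rewrite mulf_eq0 (negPf x_neq0) subr_eq0 => /eqP <-.
by ring.
Qed.

Lemma sym_stochastic2_entries_lt1 mu : eigenvalue Q mu -> `|mu| < 1 ->
  exists2 q, q < 1 & forall i j, Q i j <= q.
Proof.
move=> eig_mu mu_lt1.
have mu_neq1 : mu != 1 by apply: contraTneq mu_lt1 => ->; rewrite normr1 ltxx.
have := mu_lt1.
rewrite (sym_stochastic2_eigenvalue mu_neq1 eig_mu) ltr_norml => /andP[b_gt0 b_lt1].
exists (Num.max (1 - b) b); first by rewrite gt_max; apply/andP; split; lra.
by move=> i j; rewrite sym_stochastic2E; case: eqP => _; rewrite le_max lexx ?orbT.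
Qed.

End SymmetricStochastic2.

Lemma stochastic_entry_le1 (R : numDomainType) m n (Q : 'M[R]_(m, n)) :
  (forall i j, 0 <= Q i j) -> (forall i, \sum_j Q i j = 1) -> forall i j, Q i j <= 1.
Proof.
move=> Q_ge0 Q_row1 i j; rewrite -(Q_row1 i) (bigD1 j) //= lerDl.
by apply: sumr_ge0 => k _; exact: Q_ge0.
Qed.

Lemma convex_comb_le (R : realFieldType) (I : choiceType) (r : {fset I})
    (w q : I -> R) (i0 : I) (qm : R) :
  (forall i, 0 <= w i) -> \sum_(i <- r) w i = 1 -> qm <= 1 ->
  (forall i, i != i0 -> q i <= qm) -> q i0 <= 1 ->
  \sum_(i <- r) w i * q i <= qm + (1 - qm) * w i0.
Proof.
move=> w_ge0 w_sum1 qm_le1 q_le q0_le1.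
apply: (@le_trans _ _ (\sum_(i <- r)
    (w i * qm + (if i == i0 then w i * (1 - qm) else 0)))).
  apply: ler_sum => i _; case: eqVneq => [->|ne].
    by rewrite -mulrDr addrC subrK mulr1 ler_piMr.
  by rewrite addr0 ler_wpM2l ?q_le.
rewrite big_split /= -big_distrl /= w_sum1 mul1r lerD2l -big_mkcond /=.
have [i0r|i0r] := boolP (i0 \in r).
  by rewrite (fbig_pred1_inj (k := id)) // mulrC.
rewrite big1_seq ?mulr_ge0 ?subr_ge0 // => i /andP[/eqP-> ir].
by rewrite ir in i0r.
Qed.

Definition zeta_eq {d : nat} (b : bool) : set (Omega d) := [set e | e 0 = b].

Lemma zeta_eq_cylinder (d : nat) b :
  zeta_eq b = cylinder (d := d) [fset 0]%fset (fun _ => b).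
Proof.
apply/seteqP; split => e /=; first by move=> e0 x; rewrite inE => /eqP ->.
by apply; rewrite inE.
Qed.

Lemma measurable_zeta_eq (d : nat) b : measurable (zeta_eq b : set (Omega d)).
Proof. by apply: sub_sigma_algebra; exists 0, b. Qed.

Section OneStepBound.
Variables (R : realType) (d : nat) (eps : R) (P0 c : Site d -> R) (U : {fset Site d}).
Variables (Q0 Q1 : 'M[R]_2) (K : R.-pker (Omega d) ~> Omega d).
Hypothesis K_cyl : forall e L s,
  K e (cylinder L s) = (step_cyl eps P0 c U Q0 Q1 e L s)%:E.
Hypotheses (jumpP_ge0 : forall u, 0 <= P0 u + eps * c u)
  (jumpN_ge0 : forall u, 0 <= P0 u - eps * c u).

Lemma jump_prob_ge0 (e : Omega d) u : 0 <= P0 u + eps * c u * spin (e 0).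
Proof. by rewrite /spin; case: (e 0); rewrite ?mulr1 ?mulrN1. Qed.

(* Normalisation is not assumed: it is read off the mass of the empty cylinder. *)
Lemma jump_prob_sum1 (e : Omega d) :
  \sum_(u <- U) (P0 u + eps * c u * spin (e 0)) = 1.
Proof.
have cyl0 : cylinder fset0 (fun _ => true) = [set: Omega d].
  by apply/seteqP; split => x //= _ y; rewrite inE.
have := K_cyl e fset0 (fun _ => true); rewrite cyl0 prob_kernel => -[->].
by apply: eq_bigr => u _; rewrite big_seq_fset0 mulr1.
Qed.

Lemma kernel_zeta_eq_le (e : Omega d) b q : c 0 = 0 -> q <= 1 ->
  (forall i j, Q0 i j <= q) -> (forall i j, Q1 i j <= 1) ->
  (K e (zeta_eq b) <= (q + (1 - q) * P0 0)%:E)%E.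
Proof.
move=> c0 q_le1 Q0_le Q1_le1.
rewrite zeta_eq_cylinder K_cyl lee_fin /step_cyl.
under eq_bigr do rewrite big_seq_fset1 addr0.
have -> : P0 0 = P0 0 + eps * c 0 * spin (e 0) by rewrite c0 mulr0 mul0r addr0.
apply: convex_comb_le => //.
- exact: jump_prob_ge0.
- exact: jump_prob_sum1.
- by move=> u u_neq0; rewrite /Qat (negPf u_neq0).
- by rewrite /Qat eqxx.
Qed.

End OneStepBound.

Section FddBound.
Variables (R : realType) (d : nat) (K : R.-pker (Omega d) ~> Omega d) (s : nat -> bool).

Lemma zeta_eq_indicator (e : Omega d) b :
  ((e 0 == b)%:R)%:E = (\1_(zeta_eq b) e)%:E :> \bar R.
Proof.
rewrite indicE; case: eqVneq => [e0|e0]; first by rewrite mem_set.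
by rewrite memNset // => /= e0b; rewrite e0b eqxx in e0.
Qed.

Lemma fdd_fun_ge0 m k e : (0 <= fdd_fun K s m k e)%E.
Proof.
elim: m k e => [|m IH] k e /=; first by rewrite lee_fin.
by rewrite mule_ge0 ?lee_fin // integral_ge0.
Qed.

Lemma measurable_zeta_indicator b :
  measurable_fun [set: Omega d] (fun e : Omega d => ((e 0 == b)%:R : R)%:E).
Proof.
rewrite (_ : (fun e : Omega d => _) = (fun e => (\1_(zeta_eq b) e)%:E)).
  by apply/measurable_EFinP/measurable_indic; exact: measurable_zeta_eq.
by apply: funext => e; exact: zeta_eq_indicator.
Qed.

Lemma measurable_fdd_fun m k : measurable_fun [set: Omega d] (fdd_fun K s m k).
Proof.
elim: m k => [|m IH] k /=; first exact: measurable_zeta_indicator.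
apply: emeasurable_funM; first exact: measurable_zeta_indicator.
apply: (measurable_fun_integral_kernel (l := K)).
- by move=> V mV; exact: measurable_kernel.
- by move=> e; exact: fdd_fun_ge0.
- exact: IH.
Qed.

Variable delta : R.
Hypotheses (delta_ge0 : 0 <= delta)
  (K_zeta_eq_le : forall e b, (K e (zeta_eq b) <= delta%:E)%E).

(* The indicator is kept in the bound: integrated against [K e] at the next
   step it turns into the factor [delta]. *)
Lemma fdd_fun_le m k e :
  (fdd_fun K s m k e <= ((e 0 == s k)%:R * delta ^+ m)%:E)%E.
Proof.
elim: m k e => [|m IH] k e /=; first by rewrite expr0 mulr1.
rewrite EFinM; apply: lee_wpmul2l; first by rewrite lee_fin.
apply: (@le_trans _ _ (\int[K e]_x ((delta ^+ m) * \1_(zeta_eq (s k.+1)) x)%:E)%E).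
  apply: ge0_le_integral => //.
  - by move=> x _; exact: fdd_fun_ge0.
  - exact: measurable_fdd_fun.
  - apply/measurable_EFinP; apply: measurable_funM => //.
    by apply: measurable_indic; exact: measurable_zeta_eq.
  - move=> x _; apply: le_trans (IH _ x) _.
    by rewrite EFinM zeta_eq_indicator -EFinM mulrC.
rewrite (@integralZl_indic _ _ _ _ _ measurableT (fun=> zeta_eq (s k.+1)) (delta ^+ m));
  [|by rewrite ltNge exprn_ge0|exact: measurable_zeta_eq].
rewrite integral_indic ?setIT //; last exact: measurable_zeta_eq.
by rewrite exprS mulrC EFinM lee_wpmul2l ?lee_fin ?exprn_ge0.
Qed.

Lemma integral_fdd_fun_le (P : probability (Omega d) R) m :
  (\int[P]_e fdd_fun K s m 0 e <= (delta ^+ m)%:E)%E.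
Proof.
apply: (@le_trans _ _ (\int[P]_e (cst (delta ^+ m)%:E e))%E).
  apply: ge0_le_integral => //.
  - by move=> x _; exact: fdd_fun_ge0.
  - exact: measurable_fdd_fun.
  - move=> e _; apply: le_trans (fdd_fun_le m 0 e) _; rewrite lee_fin /=.
    by rewrite ler_piMl ?exprn_ge0 //; case: (_ == _).
rewrite integral_cst //; set t := (X in (_ * X)%E).
by rewrite (_ : t = 1%E) ?mule1 //; exact: probability_setT.
Qed.

End FddBound.

Lemma measurable_path_coord k b : measurable [set z : OmegaP | z k = b].
Proof. by apply: sub_sigma_algebra; exists k, b. Qed.

Lemma measurable_prefix (z0 : OmegaP) n :
  measurable [set z : OmegaP | forall k, (k <= n)%N -> z k = z0 k].
Proof.
have -> : [set z : OmegaP | forall k, (k <= n)%N -> z k = z0 k] =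
    \bigcap_(k in [set k | (k <= n)%N]) [set z | z k = z0 k].
  by apply/seteqP; split => z /= h k; exact: h.
by apply: bigcap_measurable => [|k _]; [exists 0%N | exact: measurable_path_coord].
Qed.

Lemma measurable_path_set1 (z0 : OmegaP) : measurable [set z0].
Proof.
have -> : [set z0] = \bigcap_k [set z : OmegaP | z k = z0 k].
  apply/seteqP; split => z /=; first by move=> -> k _.
  by move=> h; apply: funext => k; exact: h.
by apply: bigcapT_measurable => k; exact: measurable_path_coord.
Qed.

Lemma ge0_le_expr_eq0 (R : realType) (x : \bar R) (delta : R) :
  0 <= delta < 1 -> (0 <= x)%E -> (forall n, x <= (delta ^+ n)%:E)%E -> x = 0%E.
Proof.
move=> /andP[delta_ge0 delta_lt1] x_ge0 x_le.
have x_fin : x \is a fin_num by rewrite ge0_fin_numE // (le_lt_trans (x_le 0%N)) ?ltry.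
have /(@cvg_expr R) pow_cvg : `|delta| < 1 by rewrite ger0_norm.
have : fine x <= 0.
  apply: (closed_cvg (>= fine x) _ _ _ pow_cvg); first exact: closed_ge.
  by near=> n; rewrite /= -lee_fin fineK // x_le.
move=> x_le0; apply/eqP; rewrite eq_le x_ge0 andbT -(fineK x_fin) lee_fin.
Unshelve. all: by end_near.
Qed.

Theorem lemma2 (R : realType) (d : nat) (eps : R)
  (P0 c : Site d -> R) (U : {fset Site d}) (Q0 Q1 : 'M[R]_2) (mu M mubar : R)
  (K : R.-pker (Omega d) ~> (Omega d))
  (Pi0 Pi : probability (Omega d) R) (wp : probability OmegaP R) :
  (0 < d)%N ->
  0 < eps ->
  (forall u, 0 <= P0 u) ->
  (forall u, u \notin U -> P0 u = 0) ->
  \sum_(u <- U) P0 u = 1 ->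
  (forall u, P0 (- u) = P0 u) ->
  (* |p~0(lambda)| = 1 iff lambda = 0 (lambda in the torus (-pi,pi]^d) *)
  (forall l : 'rV[R]_d, (forall i, - pi < l ord0 i <= pi) ->
     (`|ptilde0 U P0 l| = 1 <-> l = 0)) ->
  (* 1/p~0 has absolutely summable Fourier coefficients *)
  (exists a : Site d -> R,
     summable [set: Site d] (fun n => (a n)%:E) /\
     forall l : 'rV[R]_d,
       ptilde0 U P0 l * ssum (fun n => a n * cos (dotR l n)) = 1) ->
  (forall u, c (- u) = - c u) ->
  (forall u, u \notin U -> c u = 0) ->
  (forall u, 0 <= P0 u + eps * c u < 1) ->
  (forall u, 0 <= P0 u - eps * c u < 1) ->
  (forall i j, 0 <= Q0 i j) -> (forall i, \sum_j Q0 i j = 1) -> Q0^T = Q0 ->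
  (forall i j, 0 <= Q1 i j) -> (forall i, \sum_j Q1 i j = 1) -> Q1^T = Q1 ->
  eigenvalue Q0 1 -> eigenvalue Q0 mu -> 0 < `|mu| < 1 ->
  (* K is the transition kernel of the environment seen from the walk *)
  (forall (e : Omega d) (L : {fset Site d}) (s : Site d -> bool),
     K e (cylinder L s) = (step_cyl eps P0 c U Q0 Q1 e L s)%:E) ->
  (* Pi0: product of uniform measures on {-1,+1} *)
  (forall (L : {fset Site d}) (s : Site d -> bool),
     Pi0 (cylinder L s) = ((2 : R) ^- #|` L|)%:E) ->
  1 < M ->
  0 < mubar < 1 ->
  (forall f, inHM Pi0 M f -> inHM Pi0 M (Top K f)) ->
  (forall A, measurable A -> (Pi A = \int[Pi]_e K e A)%E) ->
  (exists rho : Omega d -> R, exists C : R,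
     [/\ measurable_fun setT rho,
         (forall e, 0 <= rho e <= C) &
         forall A, measurable A -> (Pi A = \int[Pi0]_(e in A) (rho e)%:E)%E]) ->
  (forall f, inHM Pi0 M f -> (\int[Pi]_e (f e)%:E = 0)%E ->
     (normM Pi0 M (Top K f) <= mubar%:E * normM Pi0 M f)%E) ->
  (forall A, measurable A -> Pi (@flip d @^-1` A) = Pi A) ->
  (* wp is the law of (zeta_t) = (eta_t(0)) under P_Pi *)
  (forall (n : nat) (s : nat -> bool),
     wp [set z : OmegaP | forall k, (k <= n)%N -> z k = s k]
       = \int[Pi]_e fdd_fun K s n 0 e)%E ->
  M * Num.sqrt (mubar * (1 + 2 * mubar)) < 1 ->
  forall z0 : OmegaP, wp [set z0] = 0%E.
Proof.
move=> _ _ P0_ge0 _ _ _ _ _ c_odd _ jumpP jumpN Q0_ge0 Q0_row1 Q0_sym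
  Q1_ge0 Q1_row1 _ _ eig_mu /andP[_ mu_lt1] K_cyl _ _ _ _ _ _ _ _ wp_fdd _ z0.
have c0 : c 0 = 0 by have := c_odd 0; rewrite oppr0; lra.
have jumpP_ge0 u : 0 <= P0 u + eps * c u by case/andP: (jumpP u).
have jumpN_ge0 u : 0 <= P0 u - eps * c u by case/andP: (jumpN u).
have [q q_lt1 Q0_le] := sym_stochastic2_entries_lt1 Q0_row1 Q0_sym eig_mu mu_lt1.
have q_ge0 : 0 <= q := le_trans (Q0_ge0 ord0 ord0) (Q0_le _ _).
have P00_lt1 : P0 0 < 1 by case/andP: (jumpP 0); rewrite c0 mulr0 addr0.
have delta_bounds : 0 <= q + (1 - q) * P0 0 < 1.
  by have := P0_ge0 0; move=> ?; apply/andP; split; nra.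
apply: (ge0_le_expr_eq0 delta_bounds (measure_ge0 _ _)) => n.
apply: (@le_trans _ _ (wp [set z : OmegaP | forall k, (k <= n)%N -> z k = z0 k])).
  apply: le_measure; rewrite ?inE; last by move=> z /= ->.
    exact: measurable_path_set1.
  exact: measurable_prefix.
rewrite wp_fdd; apply: integral_fdd_fun_le => [|e b]; first by case/andP: delta_bounds.
apply: kernel_zeta_eq_le => //; first exact: ltW.
exact: stochastic_entry_le1.
Qed.
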